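(* Define the relation $\succeq^6$ on $\mathcal{A}$ by $\mathbf{A}\succeq^6\mathbf{B}\iff\mu(\mathbf{A})^n\le\mu(\mathbf{B})^m$, where $n$ is the size of $\mathbf{A}$, $m$ is the size of $\mathbf{B}$, and for $\mathbf{A}=[a_{ij}]$ of size $n$, $\mu(\mathbf{A})=\max_{1\le i<j<k\le n}\max\{a_{ij}a_{jk}/a_{ik},\ a_{ik}/(a_{ij}a_{jk})\}$. Then $\succeq^6$ is an inconsistency ranking that satisfies PR, IIP, HTE, SI and MON, but does not satisfy RED.
   Context: A pairwise comparison matrix of size $n$ is a matrix $\mathbf{A}=[a_{ij}]\in\mathbb{R}^{n\times n}$ with all entries positive and $a_{ji}=1/a_{ij}$ for all $i,j$. Let $\mathcal{A}$ denote the set of all pairwise comparison matrices of all sizes $n\ge 3$. For $\mathbf{A}\in\mathcal{A}$ of size $n$ and $3\le m\le n$, a submatrix of $\mathbf{A}$ is a matrix $\mathbf{B}=[b_{ij}]$ of size $m$ with $b_{ij}=a_{\sigma(i)\sigma(j)}$ for some strictly increasing map $\sigma:\{1,\dots,m\}\to\{1,\dots,n\}$. A triad is a pairwise comparison matrix of size $3$; a triad of $\mathbf{A}$ is a submatrix of $\mathbf{A}$ of size $3$ (when $n=3$, $\mathbf{A}$ is its own unique triad). A triad $\mathbf{T}$ is written $\mathbf{T}=(t_1;t_2;t_3)$, meaning $t_{12}=t_1$, $t_{13}=t_2$, $t_{23}=t_3$ (the remaining entries are determined by reciprocity); $\mathbf{T}^\top$ denotes its transpose, i.e. the triad $(1/t_1;1/t_2;1/t_3)$.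 An inconsistency ranking is a complete and transitive binary relation $\succeq$ on $\mathcal{A}$; $\mathbf{A}\sim\mathbf{B}$ means $\mathbf{A}\succeq\mathbf{B}$ and $\mathbf{B}\succeq\mathbf{A}$; $\mathbf{A}\preceq\mathbf{B}$ means $\mathbf{B}\succeq\mathbf{A}$. Properties of an inconsistency ranking $\succeq$: (PR) for all $s_2,t_2\ge 1$: $(1;s_2;1)\succeq(1;t_2;1)\iff s_2\le t_2$. (IIP) $\mathbf{T}\sim\mathbf{T}^\top$ for every triad $\mathbf{T}$. (HTE) $(1;t_2;t_3)\sim(1;t_2/t_3;1)$ for all $t_2,t_3>0$. (SI) $(t_1;t_2;t_3)\sim(kt_1;k^2t_2;kt_3)$ for all $t_1,t_2,t_3>0$ and all $k>0$. (MON) $\mathbf{A}\preceq\mathbf{T}$ for every $\mathbf{A}\in\mathcal{A}$ and every triad $\mathbf{T}$ of $\mathbf{A}$. (RED) every $\mathbf{A}\in\mathcal{A}$ has a triad $\mathbf{T}$ with $\mathbf{A}\sim\mathbf{T}$. *)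

From Stdlib Require Import Reals Lra Lia List.
Import ListNotations.
Open Scope R_scope.

(* A pairwise comparison matrix of size n >= 3.  Entries are indexed
   by 0..n-1 (so a_{ij} of the paper is pc_a A (i-1) (j-1)).  Entries
   outside the index range are normalised to 1, so that each matrix has
   a unique representative (up to proof irrelevance). *)
Record PCM : Type := mkPCM {
  pc_n : nat;
  pc_a : nat -> nat -> R;
  pc_n3 : (3 <= pc_n)%nat;
  pc_pos : forall i j, (i < pc_n)%nat -> (j < pc_n)%nat -> 0 < pc_a i j;
  pc_rec : forall i j, (i < pc_n)%nat -> (j < pc_n)%nat -> pc_a j i = / pc_a i j;
  pc_out : forall i j, (pc_n <= i)%nat \/ (pc_n <= j)%nat -> pc_a i j = 1
}.

Definition triple_incons (A : PCM) (i j k : nat) : R :=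
  Rmax (pc_a A i j * pc_a A j k / pc_a A i k)
       (pc_a A i k / (pc_a A i j * pc_a A j k)).

Definition triple_values (A : PCM) : list R :=
  let n := pc_n A in
  flat_map (fun i =>
    flat_map (fun j =>
      map (fun k => triple_incons A i j k) (seq (S j) (n - S j)))
      (seq (S i) (n - S i)))
    (seq 0 n).

(* mu(A) = max over i<j<k of triple_incons (the list is non-empty since
   n >= 3, and every value is >= 1, so the seed 1 is harmless). *)
Definition mu (A : PCM) : R := fold_right Rmax 1 (triple_values A).

Definition ge6 (A B : PCM) : Prop := mu A ^ pc_n A <= mu B ^ pc_n B.

Definition equiv_r (ge : PCM -> PCM -> Prop) (A B : PCM) : Prop := ge A B /\ ge B A.

Definition inconsistency_ranking (ge : PCM -> PCM -> Prop) : Prop :=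
  (forall A B, ge A B \/ ge B A) /\
  (forall A B C, ge A B -> ge B C -> ge A C).

Definition is_triad (T : PCM) (t1 t2 t3 : R) : Prop :=
  pc_n T = 3%nat /\ pc_a T 0 1 = t1 /\ pc_a T 0 2 = t2 /\ pc_a T 1 2 = t3.

Definition triad_of (T A : PCM) : Prop :=
  pc_n T = 3%nat /\
  exists i j k : nat, (i < j)%nat /\ (j < k)%nat /\ (k < pc_n A)%nat /\
    forall p q : nat, (p < 3)%nat -> (q < 3)%nat ->
      pc_a T p q = pc_a A (nth p [i; j; k] 0%nat) (nth q [i; j; k] 0%nat).

Definition PR (ge : PCM -> PCM -> Prop) : Prop :=
  forall (s2 t2 : R) (S T : PCM), 1 <= s2 -> 1 <= t2 ->
    is_triad S 1 s2 1 -> is_triad T 1 t2 1 -> (ge S T <-> s2 <= t2).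

Definition IIP (ge : PCM -> PCM -> Prop) : Prop :=
  forall (t1 t2 t3 : R) (T T' : PCM), 0 < t1 -> 0 < t2 -> 0 < t3 ->
    is_triad T t1 t2 t3 -> is_triad T' (/ t1) (/ t2) (/ t3) -> equiv_r ge T T'.

Definition HTE (ge : PCM -> PCM -> Prop) : Prop :=
  forall (t2 t3 : R) (T T' : PCM), 0 < t2 -> 0 < t3 ->
    is_triad T 1 t2 t3 -> is_triad T' 1 (t2 / t3) 1 -> equiv_r ge T T'.

Definition SI (ge : PCM -> PCM -> Prop) : Prop :=
  forall (t1 t2 t3 k : R) (T T' : PCM), 0 < t1 -> 0 < t2 -> 0 < t3 -> 0 < k ->
    is_triad T t1 t2 t3 -> is_triad T' (k * t1) (k ^ 2 * t2) (k * t3) ->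
    equiv_r ge T T'.

Definition MON (ge : PCM -> PCM -> Prop) : Prop :=
  forall (A T : PCM), triad_of T A -> ge T A.

Definition RED (ge : PCM -> PCM -> Prop) : Prop :=
  forall A : PCM, exists T : PCM, triad_of T A /\ equiv_r ge A T.

From Stdlib Require Import Reals Lra Lia List.
Open Scope R_scope.

(* The relation ge6 compares the real numbers mu A ^ n, so it is a total
   preorder.  A triad is scored by the single ratio r = t1 t3 / t2 through
   max (r, 1/r); inversion, the hierarchical transformation and the scaling
   of SI all send r to r or 1/r, and the triad (1; s; 1) has score s.  A
   triad of A satisfies mu T <= mu A, and since mu A >= 1 raising to the
   larger exponent n >= 3 only helps, which gives MON.  The same exponent
   breaks RED: when n > 3 and mu A > 1, mu A ^ n exceeds mu A ^ 3, hence the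
   score of every triad, and such a matrix is easily built by perturbing a
   single entry of the all-ones matrix. *)

Lemma pow_lt_pow_l (a b : R) (n : nat) :
  0 <= a < b -> (0 < n)%nat -> a ^ n < b ^ n.
Proof.
  intros Hab Hn; destruct n as [|m]; [lia|]; cbn.
  assert (Hm : a ^ m <= b ^ m) by (apply pow_incr; lra).
  assert (Hbm : 0 < b ^ m) by (apply pow_lt; lra).
  nra.
Qed.

Lemma pow_le_pow_l_iff (a b : R) (n : nat) :
  0 <= a -> 0 <= b -> (0 < n)%nat -> (a ^ n <= b ^ n <-> a <= b).
Proof.
  intros Ha Hb Hn; split; intro H.
  - destruct (Rle_lt_dec a b) as [|Hba]; [assumption|].
    pose proof (pow_lt_pow_l b a n (conj Hb Hba) Hn); lra.
  - apply pow_incr; lra.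
Qed.

Lemma Rmax_inv_ge_1 (r : R) : 0 < r -> 1 <= Rmax r (/ r).
Proof.
  intro Hr; destruct (Rle_lt_dec 1 r) as [H1|H1].
  - eapply Rle_trans; [exact H1 | apply Rmax_l].
  - eapply Rle_trans; [| apply Rmax_r].
    rewrite <- Rinv_1; apply Rinv_le_contravar; lra.
Qed.

Lemma fold_right_Rmax_ge_seed (x0 : R) (l : list R) : x0 <= fold_right Rmax x0 l.
Proof.
  induction l as [|y l IH]; cbn; [lra|].
  eapply Rle_trans; [exact IH | apply Rmax_r].
Qed.

Lemma fold_right_Rmax_ge_In (x0 x : R) (l : list R) :
  In x l -> x <= fold_right Rmax x0 l.
Proof.
  induction l as [|y l IH]; cbn; [tauto|].
  intros [<-|Hx]; [apply Rmax_l|].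
  eapply Rle_trans; [exact (IH Hx) | apply Rmax_r].
Qed.

Lemma mu_ge_1 (A : PCM) : 1 <= mu A.
Proof. apply fold_right_Rmax_ge_seed. Qed.

Lemma triple_incons_le_mu (A : PCM) (i j k : nat) :
  (i < j)%nat -> (j < k)%nat -> (k < pc_n A)%nat -> triple_incons A i j k <= mu A.
Proof.
  intros Hij Hjk Hk; apply fold_right_Rmax_ge_In; unfold triple_values.
  apply in_flat_map; exists i; split; [apply in_seq; lia|].
  apply in_flat_map; exists j; split; [apply in_seq; lia|].
  apply in_map_iff; exists k; split; [reflexivity | apply in_seq; lia].
Qed.

Lemma mu_size3 (A : PCM) : pc_n A = 3%nat -> mu A = Rmax (triple_incons A 0 1 2) 1.
Proof. intro H3; unfold mu, triple_values; rewrite H3; reflexivity. Qed.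

Definition triad_ratio (t1 t2 t3 : R) : R := t1 * t3 / t2.

Lemma is_triad_pos (T : PCM) (t1 t2 t3 : R) :
  is_triad T t1 t2 t3 -> 0 < t1 /\ 0 < t2 /\ 0 < t3.
Proof. intros [H3 [<- [<- <-]]]; repeat split; apply pc_pos; lia. Qed.

Lemma mu_triad (T : PCM) (t1 t2 t3 : R) : is_triad T t1 t2 t3 ->
  mu T = Rmax (triad_ratio t1 t2 t3) (/ triad_ratio t1 t2 t3).
Proof.
  intros HT; destruct (is_triad_pos _ _ _ _ HT) as [P1 [P2 P3]].
  destruct HT as [H3 [H01 [H02 H12]]].
  rewrite mu_size3 by exact H3; unfold triple_incons; rewrite H01, H02, H12.
  fold (triad_ratio t1 t2 t3).
  replace (t2 / (t1 * t3)) with (/ triad_ratio t1 t2 t3)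
    by (unfold triad_ratio; field; lra).
  apply Rmax_left, Rmax_inv_ge_1; unfold triad_ratio.
  apply Rdiv_lt_0_compat; [apply Rmult_lt_0_compat |]; lra.
Qed.

Lemma mu_triad_le (T A : PCM) : triad_of T A -> mu T <= mu A.
Proof.
  intros [H3 [i [j [k [Hij [Hjk [Hk HTA]]]]]]].
  rewrite mu_size3 by exact H3; unfold triple_incons.
  rewrite (HTA 0%nat 1%nat), (HTA 1%nat 2%nat), (HTA 0%nat 2%nat) by lia.
  apply Rmax_lub; [apply triple_incons_le_mu; assumption | apply mu_ge_1].
Qed.

Lemma inconsistency_ranking_of_score (f : PCM -> R) :
  inconsistency_ranking (fun A B => f A <= f B).
Proof.
  split.
  - intros A B; destruct (Rle_lt_dec (f A) (f B)); [left | right]; lra.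
  - intros A B C; lra.
Qed.

Lemma ge6_equiv (A B : PCM) : pc_n A = pc_n B -> mu A = mu B -> equiv_r ge6 A B.
Proof. intros Hn Hmu; unfold equiv_r, ge6; rewrite Hn, Hmu; lra. Qed.

Lemma triad_ge6_equiv (T T' : PCM) (t1 t2 t3 t1' t2' t3' : R) :
  is_triad T t1 t2 t3 -> is_triad T' t1' t2' t3' ->
  Rmax (triad_ratio t1' t2' t3') (/ triad_ratio t1' t2' t3') =
  Rmax (triad_ratio t1 t2 t3) (/ triad_ratio t1 t2 t3) ->
  equiv_r ge6 T T'.
Proof.
  intros HT HT' Hr; apply ge6_equiv.
  - rewrite (proj1 HT), (proj1 HT'); reflexivity.
  - rewrite (mu_triad _ _ _ _ HT), (mu_triad _ _ _ _ HT'); symmetry; exact Hr.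
Qed.

Lemma ge6_PR : PR ge6.
Proof.
  intros s t S T Hs Ht HS HT; unfold ge6.
  rewrite (proj1 HS), (proj1 HT), (mu_triad _ _ _ _ HS), (mu_triad _ _ _ _ HT).
  unfold triad_ratio; rewrite !Rmult_1_l, !Rdiv_1_l, !Rinv_inv.
  rewrite !Rmax_right
    by (apply Rle_trans with 1; [rewrite <- Rinv_1; apply Rinv_le_contravar |]; lra).
  apply pow_le_pow_l_iff; lra || lia.
Qed.

Lemma ge6_IIP : IIP ge6.
Proof.
  intros t1 t2 t3 T T' H1 H2 H3 HT HT'; apply (triad_ge6_equiv _ _ _ _ _ _ _ _ HT HT').
  replace (triad_ratio (/ t1) (/ t2) (/ t3)) with (/ triad_ratio t1 t2 t3)
    by (unfold triad_ratio; field; lra).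
  rewrite Rinv_inv; apply Rmax_comm.
Qed.

Lemma ge6_HTE : HTE ge6.
Proof.
  intros t2 t3 T T' H2 H3 HT HT'; apply (triad_ge6_equiv _ _ _ _ _ _ _ _ HT HT').
  replace (triad_ratio 1 (t2 / t3) 1) with (triad_ratio 1 t2 t3)
    by (unfold triad_ratio; field; lra).
  reflexivity.
Qed.

Lemma ge6_SI : SI ge6.
Proof.
  intros t1 t2 t3 k T T' H1 H2 H3 Hk HT HT'; apply (triad_ge6_equiv _ _ _ _ _ _ _ _ HT HT').
  replace (triad_ratio (k * t1) (k ^ 2 * t2) (k * t3)) with (triad_ratio t1 t2 t3)
    by (unfold triad_ratio; field; lra).
  reflexivity.
Qed.

Lemma ge6_MON : MON ge6.
Proof.
  intros A T HT; unfold ge6.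
  pose proof (mu_triad_le T A HT) as Hle; pose proof (mu_ge_1 T) as HT1.
  destruct HT as [-> _].
  apply Rle_trans with (mu A ^ 3).
  - apply pow_incr; lra.
  - apply Rle_pow; [apply mu_ge_1 | apply pc_n3].
Qed.

Lemma not_ge6_triad (A T : PCM) :
  (3 < pc_n A)%nat -> 1 < mu A -> triad_of T A -> ~ ge6 A T.
Proof.
  intros Hn Hmu HT; unfold ge6.
  pose proof (mu_triad_le T A HT) as Hle; pose proof (mu_ge_1 T) as HT1.
  destruct HT as [-> _].
  assert (mu T ^ 3 <= mu A ^ 3) by (apply pow_incr; lra).
  assert (mu A ^ 3 < mu A ^ pc_n A) by (apply Rlt_pow; assumption).
  lra.
Qed.

Definition spike (x : R) (i j : nat) : R :=
  match i, j with
  | 0%nat, 2%nat => x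
  | 2%nat, 0%nat => / x
  | _, _ => 1
  end.

Section Spike.

Variables (n : nat) (x : R).
Hypotheses (Hn : (3 <= n)%nat) (Hx : 0 < x).

Lemma spike_pos (i j : nat) : 0 < spike x i j.
Proof.
  destruct i as [|[|[|i]]], j as [|[|[|j]]]; cbn;
    try apply Rinv_0_lt_compat; lra.
Qed.

Lemma spike_rec (i j : nat) : spike x j i = / spike x i j.
Proof.
  destruct i as [|[|[|i]]], j as [|[|[|j]]]; cbn;
    rewrite ?Rinv_inv, ?Rinv_1; reflexivity.
Qed.

Lemma spike_out (i j : nat) : (n <= i)%nat \/ (n <= j)%nat -> spike x i j = 1.
Proof. destruct i as [|[|[|i]]], j as [|[|[|j]]]; cbn; lia || reflexivity. Qed.

Definition spike_pcm : PCM :=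
  mkPCM n (spike x) Hn (fun i j _ _ => spike_pos i j)
    (fun i j _ _ => spike_rec i j) spike_out.

Lemma mu_spike_pcm_gt_1 : 1 < x -> 1 < mu spike_pcm.
Proof.
  intro Hx1; eapply Rlt_le_trans;
    [| apply (triple_incons_le_mu spike_pcm 0 1 2); cbn; lia].
  unfold triple_incons; cbn.
  eapply Rlt_le_trans; [| apply Rmax_r]; lra.
Qed.

End Spike.

Lemma ge6_not_RED : ~ RED ge6.
Proof.
  set (A := spike_pcm 4 2 ltac:(lia) ltac:(lra)).
  assert (HA : 1 < mu A) by (apply mu_spike_pcm_gt_1; lra).
  intros Hred; destruct (Hred A) as [T [HT [HAT _]]].
  exact (not_ge6_triad A T ltac:(cbn; lia) HA HT HAT).
Qed.

Theorem mainTheorem7 :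
  inconsistency_ranking ge6 /\ PR ge6 /\ IIP ge6 /\ HTE ge6 /\ SI ge6 /\
  MON ge6 /\ ~ RED ge6.
Proof.
  exact (conj (inconsistency_ranking_of_score (fun A => mu A ^ pc_n A))
          (conj ge6_PR (conj ge6_IIP (conj ge6_HTE
          (conj ge6_SI (conj ge6_MON ge6_not_RED)))))).
Qed.
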